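(* Let $R$ be a commutative u-ring and let $n\ge 1$ be an integer. Then every $n$-absorbing ideal of $R$ is strongly $n$-absorbing.
   Context: All rings are commutative with identity $1\neq 0$. An ideal $I$ of $R$ is $n$-absorbing if whenever $x_1,\dots,x_{n+1}\in R$ and $x_1x_2\cdots x_{n+1}\in I$, the product of some $n$ of the $x_i$'s lies in $I$. An ideal $I$ of $R$ is strongly $n$-absorbing if whenever $I_1,\dots,I_{n+1}$ are ideals of $R$ with $I_1I_2\cdots I_{n+1}\subseteq I$, the product of some $n$ of the $I_j$'s is contained in $I$. An ideal $I$ of $R$ is a u-ideal if whenever $I\subseteq I_1\cup\cdots\cup I_m$ for finitely many ideals $I_1,\dots,I_m$ of $R$, then $I\subseteq I_j$ for some $j$. A ring $R$ is a u-ring if every ideal of $R$ is a u-ideal. *)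

From mathcomp Require Import all_boot all_order all_algebra.
Set Implicit Arguments. Unset Strict Implicit. Unset Printing Implicit Defensive.
Import GRing.Theory.
Local Open Scope ring_scope.

Definition subsetR (R : Type) (A B : R -> Prop) := forall x, A x -> B x.

Definition is_ideal (R : comNzRingType) (I : R -> Prop) : Prop :=
  [/\ I 0, (forall x y, I x -> I y -> I (x + y))
    & (forall r x, I x -> I (r * x))].

Definition gen_ideal (R : comNzRingType) (S : R -> Prop) : R -> Prop :=
  fun x => forall J, is_ideal J -> subsetR S J -> J x.

Definition ideal_prod (R : comNzRingType) (m : nat) (I : 'I_m -> R -> Prop)
  : R -> Prop :=
  gen_ideal (fun y => exists x : 'I_m -> R,
                 (forall j, I j (x j)) /\ y = \prod_(j < m) x j).

Definition n_absorbing (R : comNzRingType) (n : nat) (I : R -> Prop) : Prop :=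
  is_ideal I /\
  forall x : 'I_n.+1 -> R, I (\prod_(j < n.+1) x j) ->
    exists i : 'I_n.+1, I (\prod_(j < n.+1 | j != i) x j).

Definition strongly_n_absorbing (R : comNzRingType) (n : nat) (I : R -> Prop)
  : Prop :=
  is_ideal I /\
  forall Is : 'I_n.+1 -> R -> Prop, (forall j, is_ideal (Is j)) ->
    subsetR (ideal_prod Is) I ->
    exists i : 'I_n.+1, subsetR (ideal_prod (fun k : 'I_n => Is (lift i k))) I.

Definition u_ideal (R : comNzRingType) (I : R -> Prop) : Prop :=
  forall (m : nat) (J : 'I_m -> R -> Prop), (forall j, is_ideal (J j)) ->
    subsetR I (fun x => exists j, J j x) -> exists j, subsetR I (J j).

Definition u_ring (R : comNzRingType) : Prop :=
  forall I : R -> Prop, is_ideal I -> u_ideal I.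

From mathcomp Require Import all_boot all_order all_algebra.
From Stdlib Require Import Classical FunctionalExtensionality.
Set Implicit Arguments. Unset Strict Implicit. Unset Printing Implicit Defensive.
Import GRing.Theory.
Local Open Scope ring_scope.

(* Say a family T_0, ..., T_n of subsets of R is absorbed if, after omitting
   some T_i, every product of elements chosen from the remaining sets lies in
   I: strong n-absorption asks this of families of ideals, n-absorption of
   families of singletons.  Ideals are traded for singletons one index k at a
   time.  Suppose that for each y in T_k the family with {y} at k is absorbed.
   Either some y is absorbed by omitting k itself, which does not involve T_k,
   or each y lies in one of the n sets
     J_q = {z | the family with {z} at k is absorbed by omitting q},  q <> k.
   These J_q are colon ideals of I, so the u-ideal property puts T_k inside a
   single J_q, i.e. the family is absorbed by omitting q. *)

Section Products.

Variables (R : comNzRingType) (I : R -> Prop).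
Hypothesis I_ideal : is_ideal I.

Definition products_in m (S : 'I_m -> R -> Prop) :=
  forall a : 'I_m -> R, (forall j, S j (a j)) -> I (\prod_(j < m) a j).

Definition drop_at m (i : 'I_m.+1) (S : 'I_m.+1 -> R -> Prop) : 'I_m -> R -> Prop :=
  fun k => S (lift i k).

Definition set_at m (S : 'I_m -> R -> Prop) (p : 'I_m) (z : R) :=
  fun j => if j == p then (fun w => w = z) else S j.

Lemma ideal_prod_subsetP m (S : 'I_m -> R -> Prop) :
  subsetR (ideal_prod S) I <-> products_in S.
Proof.
split=> [HS a Ha | HS x Hx]; first by apply: HS => J _; apply; exists a.
by apply: Hx => // y [a [Ha ->]]; apply: HS.
Qed.

Lemma products_in_set_atP m (S : 'I_m -> R -> Prop) (p : 'I_m) :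
  products_in S <-> forall z, S p z -> products_in (set_at S p z).
Proof.
split=> [HS z Sz a Ha | HS a Ha].
  by apply: HS => j; move: (Ha j); rewrite /set_at; case: eqP => [-> ->|].
apply: (HS (a p) (Ha p)) => j; rewrite /set_at; case: eqP => [-> //|_].
exact: Ha.
Qed.

Lemma products_in_set_at m (S : 'I_m -> R -> Prop) (p : 'I_m) (z : R) :
  products_in (set_at S p z) <->
  forall a : 'I_m -> R, (forall j, j != p -> S j (a j)) ->
    I (z * \prod_(j < m | j != p) a j).
Proof.
split=> [HS a Ha | HS a Ha].
  have := HS (fun j => if j == p then z else a j).
  rewrite (bigD1 p) //= eqxx (eq_bigr a) => [|j /negbTE -> //].
  by apply=> j; rewrite /set_at; case: eqP => // /eqP; apply: Ha.
have ap : a p = z by move: (Ha p); rewrite /set_at eqxx.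
rewrite (bigD1 p) //= ap; apply: HS => j /negbTE jp.
by move: (Ha j); rewrite /set_at jp.
Qed.

Lemma is_ideal_products_in_set_at m (S : 'I_m -> R -> Prop) (p : 'I_m) :
  is_ideal (fun z => products_in (set_at S p z)).
Proof.
case: I_ideal => I0 ID IM.
split=> [|x y|r x]; rewrite !products_in_set_at.
- by move=> a _; rewrite mul0r.
- by move=> Hx Hy a Ha; rewrite mulrDl; apply: ID; [apply: Hx | apply: Hy].
- by move=> Hx a Ha; rewrite -mulrA; apply: IM; apply: Hx.
Qed.

Lemma drop_at_set_at_id m (S : 'I_m.+1 -> R -> Prop) (p : 'I_m.+1) z :
  drop_at p (set_at S p z) = drop_at p S.
Proof.
apply: functional_extensionality => k.
by rewrite /drop_at /set_at eq_sym (negbTE (neq_lift p k)).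
Qed.

Lemma drop_at_set_at m (S : 'I_m.+1 -> R -> Prop) (i p : 'I_m.+1) (k0 : 'I_m) z :
  lift i k0 = p -> drop_at i (set_at S p z) = set_at (drop_at i S) k0 z.
Proof.
move=> <-; apply: functional_extensionality => k.
by rewrite /drop_at /set_at (inj_eq (@lift_inj _ i)).
Qed.

Lemma prod_neq_lift n (i : 'I_n.+1) (x : 'I_n.+1 -> R) :
  \prod_(j < n.+1 | j != i) x j = \prod_(k < n) x (lift i k).
Proof.
rewrite big_mkcond (bigD1_ord i) //= eqxx mul1r.
by apply: eq_bigr => k _; rewrite eq_sym (negbTE (neq_lift i k)).
Qed.

Lemma products_in_absorb_at m (T : 'I_m.+1 -> R -> Prop) (p : 'I_m.+1) :
  u_ideal (T p) ->
  (forall y, T p y -> exists i, products_in (drop_at i (set_at T p y))) ->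
  exists i, products_in (drop_at i T).
Proof.
move=> uTp absT.
case: (classic (exists2 y, T p y & products_in (drop_at p (set_at T p y)))).
  by case=> y _; rewrite drop_at_set_at_id => drop_p; exists p.
move=> no_drop_p.
pose J (q : 'I_m) z := products_in (drop_at (lift p q) (set_at T p z)).
have J_set_at q : exists2 k0, lift (lift p q) k0 = p &
    J q = fun z => products_in (set_at (drop_at (lift p q) T) k0 z).
  case: (unliftP (lift p q) p) => [k0 Ek0|E].
    exists k0 => //; apply: functional_extensionality => z.
    by rewrite /J (drop_at_set_at _ _ (esym Ek0)).
  by move: (neq_lift p q); rewrite -E eqxx.
have J_ideal q : is_ideal (J q).
  by have [k0 _ ->] := J_set_at q; apply: is_ideal_products_in_set_at.
have J_cover : subsetR (T p) (fun z => exists q, J q z).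
  move=> y Ty; have [i Hi] := absT y Ty.
  case: (unliftP p i) => [q Eq|Ep]; first by exists q; rewrite /J -Eq.
  by move: Hi; rewrite Ep => Hi; case: no_drop_p; exists y.
have [q TpJ] := uTp m J J_ideal J_cover.
exists (lift p q); have [k0 Ek0 EJ] := J_set_at q.
apply/(products_in_set_atP _ k0) => z Tz.
have Tpz : T p z by rewrite -Ek0.
by have := TpJ z Tpz; rewrite EJ.
Qed.

Section Absorbing.

Variable n : nat.
Hypothesis u_ring_R : u_ring R.
Hypothesis I_absorbing : forall x : 'I_n.+1 -> R,
  I (\prod_(j < n.+1) x j) -> exists i, I (\prod_(j < n.+1 | j != i) x j).

Lemma products_in_absorb_singletons (x : 'I_n.+1 -> R) (T : 'I_n.+1 -> R -> Prop) :
  (forall j w, T j w <-> w = x j) -> products_in T ->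
  exists i, products_in (drop_at i T).
Proof.
move=> Tx HT; have [i Hi] := I_absorbing (HT x (fun j => (Tx j _).2 erefl)).
exists i => a Ha; rewrite (eq_bigr (fun k => x (lift i k))) -?prod_neq_lift //.
by move=> k _; apply/(Tx _ _).1/Ha.
Qed.

Lemma products_in_absorb k (x : 'I_n.+1 -> R) (T : 'I_n.+1 -> R -> Prop) :
  (k <= n.+1)%N ->
  (forall j : 'I_n.+1, (j < k)%N -> is_ideal (T j)) ->
  (forall j : 'I_n.+1, (k <= j)%N -> forall w, T j w <-> w = x j) ->
  products_in T -> exists i, products_in (drop_at i T).
Proof.
elim: k x T => [|k IH] x T le_k_n T_ideal T_single HT.
  by apply: (products_in_absorb_singletons (x := x)) => // j; apply: T_single.
pose p := Ordinal le_k_n.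
apply: (products_in_absorb_at (u_ring_R (T_ideal p (ltnSn k)))) => y Ty.
apply: (IH (fun j => if j == p then y else x j)) (ltnW le_k_n) _ _ _.
- move=> j lt_j_k; rewrite /set_at ifN; first by apply: T_ideal; rewrite ltnW.
  by apply: contraTneq lt_j_k => ->; rewrite ltnn.
- move=> j le_k_j w; rewrite /set_at; case: eqP => // /eqP ne_j_p.
  apply: T_single; rewrite ltn_neqAle le_k_j andbT.
  by apply: contra ne_j_p => /eqP k_j; apply/eqP/val_inj.
- exact: (products_in_set_atP _ p).1 HT y Ty.
Qed.

End Absorbing.

End Products.

(* The argument does not use [0 < n]. *)
Theorem theorem2 (R : comNzRingType) (n : nat) (hn : (0 < n)%N) (hu : u_ring R)
  (I : R -> Prop) : n_absorbing n I -> strongly_n_absorbing n I.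
Proof.
case=> I_ideal I_absorbing; split=> // Is Is_ideal prod_sub.
have [|i Hi] := products_in_absorb I_ideal hu I_absorbing (x := fun _ => 0)
  (leqnn n.+1) (fun j _ => Is_ideal j) _ ((ideal_prod_subsetP I_ideal _).1 prod_sub).
  by move=> j; rewrite leqNgt ltn_ord.
by exists i; apply/(ideal_prod_subsetP I_ideal).
Qed.
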